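(* Let $M,N,K\ge 1$ be integers, $\mathcal K=\{1,\dots,K\}$, $\mathbf G\in\mathbb C^{N\times M}$, $\mathbf h_1,\dots,\mathbf h_K\in\mathbb C^{M}$, $P_0>0$, and for each $k\in\mathcal K$ let $\Gamma_k>0$ and $\sigma_k^2>0$. Write $\mathbf H_k=\mathbf h_k\mathbf h_k^H$. For a positive semidefinite $\mathbf R\in\mathbb C^{M\times M}$ let $f(\mathbf R)=\mathrm{tr}\big((\mathbf G\mathbf R\mathbf G^H)^{-1}\big)$ when $\mathbf G\mathbf R\mathbf G^H$ is invertible, and $f(\mathbf R)=+\infty$ otherwise. Consider the problems: (P2.1): minimize $f\big(\sum_{k\in\mathcal K}\mathbf w_k\mathbf w_k^H+\mathbf R_0\big)$ over $\mathbf w_1,\dots,\mathbf w_K\in\mathbb C^M$ and Hermitian $\mathbf R_0\in\mathbb C^{M\times M}$, subject to $\frac{|\mathbf h_k^H\mathbf w_k|^2}{\sum_{i\in\mathcal K,i\ne k}|\mathbf h_k^H\mathbf w_i|^2+\sigma_k^2}\ge\Gamma_k$ for all $k\in\mathcal K$, $\sum_{k\in\mathcal K}\|\mathbf w_k\|^2+\mathrm{tr}(\mathbf R_0)\le P_0$, and $\mathbf R_0\succeq\mathbf 0$; (SDR2.1): minimize $f\big(\sum_{k\in\mathcal K}\mathbf W_k+\mathbf R_0\big)$ over Hermitian $\mathbf W_1,\dots,\mathbf W_K,\mathbf R_0\in\mathbb C^{M\times M}$, subject to $\frac{1}{\Gamma_k}\mathrm{tr}(\mathbf H_k\mathbf W_k)-\sum_{i\in\mathcal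 K,i\ne k}\mathrm{tr}(\mathbf H_k\mathbf W_i)\ge\sigma_k^2$ for all $k\in\mathcal K$, $\sum_{k\in\mathcal K}\mathrm{tr}(\mathbf W_k)+\mathrm{tr}(\mathbf R_0)\le P_0$, $\mathbf R_0\succeq\mathbf 0$, and $\mathbf W_k\succeq\mathbf 0$ for all $k\in\mathcal K$. Then (P2.1) and (SDR2.1) have the same optimal value. Moreover, if $\{\bar{\mathbf W}_k\}_{k\in\mathcal K},\bar{\mathbf R}_0$ is an optimal solution of (SDR2.1), then $\mathbf w_k^{\star\star}=(\mathbf h_k^H\bar{\mathbf W}_k\mathbf h_k)^{-1/2}\bar{\mathbf W}_k\mathbf h_k$ for $k\in\mathcal K$ and $\mathbf R_0^{\star\star}=\bar{\mathbf R}_0+\sum_{k\in\mathcal K}\bar{\mathbf W}_k-\sum_{k\in\mathcal K}\mathbf w_k^{\star\star}(\mathbf w_k^{\star\star})^H$ form an optimal solution of (P2.1).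
   Context: This is the transmit beamforming subproblem of an IRS-enabled integrated sensing and communication system with a fixed IRS reflection vector, for users able to pre-cancel the sensing-signal interference: $\mathbf h_k$ is the combined channel from the base station to user $k$, $\mathbf w_k$ the information beamformer, $\mathbf R_0$ the sensing-signal covariance, $\mathbf G$ the base-station-to-IRS channel, $\Gamma_k$ the SINR threshold, $\sigma_k^2$ the noise variance, $P_0$ the power budget. The objective is (up to a positive constant) the Cramér-Rao bound for estimating the target response matrix. *)

From HB Require Import structures.
From mathcomp Require Import all_boot all_order all_algebra.
From mathcomp Require Import complex.
From mathcomp Require Import classical_sets reals constructive_ereal ereal.
Set Implicit Arguments. Unset Strict Implicit. Unset Printing Implicit Defensive.
Import Order.TTheory GRing.Theory Num.Theory.
Local Open Scope ring_scope.
Local Open Scope classical_set_scope.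
Local Open Scope complex_scope.

Section Defs.
Variable R : realType.
Local Notation C := R[i].

Definition adj (m n : nat) (A : 'M[C]_(m, n)) : 'M[C]_(n, m) :=
  (map_mx (@conjc R) A)^T.

Definition hermitian (n : nat) (A : 'M[C]_n) : Prop := adj A = A.

(* positive semidefinite: Hermitian with nonnegative quadratic form
   (the order on C: 0 <= z iff z is a nonnegative real) *)
Definition psd (n : nat) (A : 'M[C]_n) : Prop :=
  hermitian A /\ forall x : 'cV[C]_n, 0 <= (adj x *m A *m x) 0 0.

Definition cdot (n : nat) (u v : 'cV[C]_n) : C := (adj u *m v) 0 0.

Definition vnorm2 (n : nat) (w : 'cV[C]_n) : C := \sum_i `|w i 0| ^+ 2.

Definition crb (N M : nat) (G : 'M[C]_(N, M)) (Rm : 'M[C]_M) : \bar R :=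
  let A := G *m Rm *m adj G in
  if A \in unitmx then (complex.Re (\tr (invmx A)))%:E else +oo%E.

Variables (M N K : nat) (G : 'M[C]_(N, M)) (h : 'I_K -> 'cV[C]_M)
  (P0 : R) (Gam s2 : 'I_K -> R).

Definition obj_P21 (p : ('I_K -> 'cV[C]_M) * 'M[C]_M) : \bar R :=
  crb G (\sum_(k < K) p.1 k *m adj (p.1 k) + p.2).

Definition feas_P21 (p : ('I_K -> 'cV[C]_M) * 'M[C]_M) : Prop :=
  let w := p.1 in let R0 := p.2 in
  [/\ hermitian R0,
      (forall k : 'I_K,
        `|cdot (h k) (w k)| ^+ 2
          / (\sum_(i < K | i != k) `|cdot (h k) (w i)| ^+ 2 + (s2 k)%:C)
        >= (Gam k)%:C),
      \sum_(k < K) vnorm2 (w k) + \tr R0 <= P0%:C &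
      psd R0].

Definition val_P21 : \bar R := ereal_inf [set obj_P21 p | p in feas_P21].

Definition opt_P21 (p : ('I_K -> 'cV[C]_M) * 'M[C]_M) : Prop :=
  feas_P21 p /\ forall q, feas_P21 q -> (obj_P21 p <= obj_P21 q)%E.

Definition Hk (k : 'I_K) : 'M[C]_M := h k *m adj (h k).

Definition obj_SDR (q : ('I_K -> 'M[C]_M) * 'M[C]_M) : \bar R :=
  crb G (\sum_(k < K) q.1 k + q.2).

Definition feas_SDR (q : ('I_K -> 'M[C]_M) * 'M[C]_M) : Prop :=
  let W := q.1 in let R0 := q.2 in
  [/\ hermitian R0 /\ (forall k, hermitian (W k)),
      (forall k : 'I_K,
        ((Gam k)%:C)^-1 * \tr (Hk k *m W k)
          - \sum_(i < K | i != k) \tr (Hk k *m W i) >= (s2 k)%:C),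
      \sum_(k < K) \tr (W k) + \tr R0 <= P0%:C,
      psd R0 & forall k, psd (W k)].

Definition val_SDR : \bar R := ereal_inf [set obj_SDR q | q in feas_SDR].

Definition opt_SDR (q : ('I_K -> 'M[C]_M) * 'M[C]_M) : Prop :=
  feas_SDR q /\ forall q', feas_SDR q' -> (obj_SDR q <= obj_SDR q')%E.

Definition w_ss (W : 'I_K -> 'M[C]_M) (k : 'I_K) : 'cV[C]_M :=
  (sqrtc (cdot (h k) (W k *m h k)))^-1 *: (W k *m h k).

Definition R0_ss (W : 'I_K -> 'M[C]_M) (R0 : 'M[C]_M) : 'M[C]_M :=
  R0 + \sum_(k < K) W k - \sum_(k < K) w_ss W k *m adj (w_ss W k).

End Defs.

(* (SDR2.1) is (P2.1) with w_k w_k^H relaxed to W_k >= 0, and both objectives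
   only see the total covariance sum_k W_k + R_0; so lifting beamformers to
   rank-one matrices maps feasible points of (P2.1) to feasible points of
   (SDR2.1) with the same objective.  Conversely, for a feasible (W, R_0) put
   w_k = W_k h_k / sqrt(h_k^H W_k h_k).  Then |h_k^H w_k|^2 = h_k^H W_k h_k,
   while Cauchy-Schwarz for the semidefinite form of W_i gives both
   |h_k^H w_i|^2 <= h_k^H W_i h_k (so every SINR constraint survives) and
   W_k - w_k w_k^H >= 0 (so R_0** >= 0); the total covariance, hence the power
   and the objective, is unchanged.  Two objective-preserving maps between the
   feasible sets give equal optimal values and carry minimizers back. *)

From Pilot Require Import Defs.
From HB Require Import structures.
From mathcomp Require Import all_boot all_order all_algebra.
From mathcomp Require Import complex ring.
From mathcomp Require Import classical_sets reals constructive_ereal ereal.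
(* Re-imported so that [hermitian] is that of Defs, not sesquilinear's notation. *)
Import Pilot.Defs.
Import Order.TTheory GRing.Theory Num.Theory.
Set Implicit Arguments. Unset Strict Implicit. Unset Printing Implicit Defensive.
Local Open Scope ring_scope.
Local Open Scope complex_scope.

Section Adjoint.
Variable R : realType.
Local Notation C := R[i].

Lemma adjE m n (A : 'M[C]_(m, n)) i j : adj A i j = conjc (A j i).
Proof. by rewrite !mxE. Qed.

Lemma adjK m n (A : 'M[C]_(m, n)) : adj (adj A) = A.
Proof. by apply/matrixP=> i j; rewrite !adjE conjcK. Qed.

Lemma adjD m n (A B : 'M[C]_(m, n)) : adj (A + B) = adj A + adj B.
Proof. by rewrite /adj map_mxD raddfD. Qed.

Lemma adjN m n (A : 'M[C]_(m, n)) : adj (- A) = - adj A.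
Proof. by rewrite /adj map_mxN raddfN. Qed.

Lemma adjB m n (A B : 'M[C]_(m, n)) : adj (A - B) = adj A - adj B.
Proof. by rewrite adjD adjN. Qed.

Lemma adjZ m n a (A : 'M[C]_(m, n)) : adj (a *: A) = conjc a *: adj A.
Proof. by rewrite /adj (map_mxZ (@conjc R)) linearZ. Qed.

Lemma adjM m n p (A : 'M[C]_(m, n)) (B : 'M[C]_(n, p)) :
  adj (A *m B) = adj B *m adj A.
Proof. by rewrite /adj map_mxM trmx_mul. Qed.

End Adjoint.

Section HermitianForms.
Variables (R : realType) (n : nat).
Local Notation C := R[i].
Implicit Types (W : 'M[C]_n) (x y u : 'cV[C]_n).

Definition hform W x y : C := (adj x *m W *m y) 0 0.

Lemma mx11_mul (A B : 'M[C]_1) : (A *m B) 0 0 = A 0 0 * B 0 0.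
Proof. by rewrite !mxE big_ord1. Qed.

Lemma hformDm W1 W2 x y : hform (W1 + W2) x y = hform W1 x y + hform W2 x y.
Proof. by rewrite /hform mulmxDr mulmxDl mxE. Qed.

Lemma hformBm W1 W2 x y : hform (W1 - W2) x y = hform W1 x y - hform W2 x y.
Proof. by rewrite /hform mulmxBr mulmxBl !mxE. Qed.

Lemma hformBr W x y z : hform W x (y - z) = hform W x y - hform W x z.
Proof. by rewrite /hform mulmxBr !mxE. Qed.

Lemma hformZr W x a y : hform W x (a *: y) = a * hform W x y.
Proof. by rewrite /hform -scalemxAr mxE. Qed.

Lemma hformBl W x y z : hform W (x - y) z = hform W x z - hform W y z.
Proof. by rewrite /hform adjB !mulmxBl !mxE. Qed.

Lemma hformZl W a x y : hform W (a *: x) y = conjc a * hform W x y.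
Proof. by rewrite /hform adjZ -!scalemxAl mxE. Qed.

Lemma hform_sym W x y : hermitian W -> hform W y x = conjc (hform W x y).
Proof. by move=> hW; rewrite /hform -adjE !adjM adjK hW mulmxA. Qed.

Lemma psd_hform_ge0 W x : psd W -> 0 <= hform W x x.
Proof. by case=> _ /(_ x). Qed.

Lemma conjc_ge0 (z : C) : 0 <= z -> conjc z = z.
Proof. by move=> /ger0_real/RRe_real <-; rewrite conjc_real. Qed.

Lemma psd_cauchy_schwarz W x y : psd W -> 0 < hform W y y ->
  `|hform W x y| ^+ 2 / hform W y y <= hform W x x.
Proof.
move=> pW c_gt0; have hW : hermitian W by case: pW.
set c := hform W y y; set b := hform W x y; set a := hform W x x.
have cc : conjc c = c by apply/conjc_ge0/ltW.
have c_neq0 : c != 0 by rewrite gt_eqF.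
have t_conj : conjc (conjc b / c) = b / c by rewrite rmorphM /= conjcK conjc_inv cc.
have := psd_hform_ge0 (x - (conjc b / c) *: y) pW.
rewrite !(hformBl, hformBr, hformZl, hformZr) -/a -/b -/c (hform_sym _ _ hW) -/b.
rewrite t_conj sqr_normc.
suff -> : a - conjc b / c * b - b / c * (conjc b - conjc b / c * c)
   = a - b * conjc b / c by rewrite subr_ge0.
by field.
Qed.

Lemma hform_rank1 u x : hform (u *m adj u) x x = `|cdot x u| ^+ 2.
Proof.
rewrite /hform mulmxA -(mulmxA (adj x *m u)) mx11_mul sqr_normc /cdot.
by rewrite -adjE adjM adjK.
Qed.

Lemma psd0 : psd (0 : 'M[C]_n).
Proof.
split=> [|x]; last by rewrite mulmx0 mul0mx mxE.
by apply/matrixP=> i j; rewrite !mxE conjc0.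
Qed.

Lemma psdD W1 W2 : psd W1 -> psd W2 -> psd (W1 + W2).
Proof.
move=> [hW1 pW1] [hW2 pW2]; split; first by rewrite /hermitian adjD hW1 hW2.
by move=> x; rewrite -/(hform (W1 + W2) x x) hformDm addr_ge0 ?pW1 ?pW2.
Qed.

Lemma psd_sum (I : finType) (F : I -> 'M[C]_n) :
  (forall i, psd (F i)) -> psd (\sum_i F i).
Proof. by move=> pF; elim/big_ind: _ => //; [exact: psd0 | exact: psdD]. Qed.

Lemma psd_rank1 u : psd (u *m adj u).
Proof.
split=> [|x]; first by rewrite /hermitian adjM adjK.
by rewrite -/(hform (u *m adj u) x x) hform_rank1 exprn_ge0.
Qed.

Definition rank1_factor W y : 'cV[C]_n :=
  (sqrtc (cdot y (W *m y)))^-1 *: (W *m y).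

Lemma cdot_rank1_factor W x y : 0 <= hform W y y ->
  `|cdot x (rank1_factor W y)| ^+ 2 = `|hform W x y| ^+ 2 / hform W y y.
Proof.
move=> c_ge0; have cdotE z : cdot x (z *: (W *m y)) = z * hform W x y.
  by rewrite /cdot -scalemxAr mxE mulmxA.
rewrite /rank1_factor cdotE /cdot mulmxA -/(hform W y y).
rewrite normrM exprMn normfV exprVn mulrC.
by rewrite -[`|sqrtc _| ^+ 2]normrX sqr_sqrtc (ger0_norm c_ge0).
Qed.

Lemma psd_sub_rank1_factor W y : psd W -> 0 < hform W y y ->
  psd (W - rank1_factor W y *m adj (rank1_factor W y)).
Proof.
move=> pW c_gt0; have hW : hermitian W by case: pW.
split=> [|x]; first by rewrite /hermitian adjB adjM adjK hW.
rewrite -/(hform (W - _) x x) hformBm hform_rank1 (cdot_rank1_factor x (ltW c_gt0)).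
by rewrite subr_ge0 psd_cauchy_schwarz.
Qed.

End HermitianForms.

Lemma ler_ratio_linear (F : numFieldType) (g a S s : F) :
  0 < g -> 0 < S + s -> (g <= a / (S + s)) = (s <= g^-1 * a - S).
Proof.
by move=> g_gt0 D_gt0; rewrite ler_pdivlMr // lerBrDr ler_pdivlMl // [s + S]addrC.
Qed.

Lemma ltc0R (R : realType) (x : R) : 0 < x -> 0 < x%:C.
Proof. by rewrite ltcR. Qed.

Section Traces.
Variables (R : realType) (n : nat).
Local Notation C := R[i].

Lemma mxtrace11 (A : 'M[C]_1) : \tr A = A 0 0.
Proof. by rewrite /mxtrace big_ord1. Qed.

Lemma mxtraceN (A : 'M[C]_n) : \tr (- A) = - \tr A.
Proof. exact: raddfN. Qed.

Lemma mxtrace_sum (I : finType) (F : I -> 'M[C]_n) :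
  \tr (\sum_i F i) = \sum_i \tr (F i).
Proof. exact: raddf_sum. Qed.

Lemma mxtrace_rank1_mul (u : 'cV[C]_n) (W : 'M[C]_n) :
  \tr (u *m adj u *m W) = hform W u u.
Proof. by rewrite -mulmxA mxtrace_mulC mxtrace11. Qed.

Lemma vnorm2_mxtrace (w : 'cV[C]_n) : vnorm2 w = \tr (w *m adj w).
Proof.
rewrite mxtrace_mulC mxtrace11 /vnorm2 mxE; apply: eq_bigr => j _.
by rewrite adjE sqr_normc mulrC.
Qed.

End Traces.

Local Open Scope classical_set_scope.

Section ValuePreservingReduction.
Variables (T U : Type) (d : Order.disp_t) (V : porderType d).
Variables (A : set T) (B : set U) (f : T -> V) (g : U -> V).
Variables (to : T -> U) (back : U -> T).
Hypothesis to_feas : forall a, A a -> B (to a) /\ g (to a) = f a.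
Hypothesis back_feas : forall b, B b -> A (back b) /\ f (back b) = g b.

Lemma objective_images_eq : [set f a | a in A] = [set g b | b in B].
Proof.
apply/seteqP; split=> _ [x Dx <-].
  by have [Bx gx] := to_feas Dx; exists (to x).
by have [Ax fx] := back_feas Dx; exists (back x).
Qed.

Lemma back_minimizer b :
  B b /\ (forall b', B b' -> (g b <= g b')%O) ->
  A (back b) /\ (forall a, A a -> (f (back b) <= f a)%O).
Proof.
move=> [Bb b_min]; have [Aback fback] := back_feas Bb.
split=> // a Aa; have [Bto gto] := to_feas Aa.
by rewrite fback -gto b_min.
Qed.

End ValuePreservingReduction.

Section Reformulation.
Variables (R : realType) (M N K : nat).
Local Notation C := R[i].
Variables (G : 'M[C]_(N, M)) (h : 'I_K -> 'cV[C]_M) (P0 : R) (Gam s2 : 'I_K -> R).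
Hypotheses (Gam_gt0 : forall k, 0 < Gam k) (s2_gt0 : forall k, 0 < s2 k).

Definition sdr_of_beams (p : ('I_K -> 'cV[C]_M) * 'M[C]_M) :=
  (fun k => p.1 k *m adj (p.1 k), p.2).

Definition beams_of_sdr (q : ('I_K -> 'M[C]_M) * 'M[C]_M) :=
  (w_ss h q.1, R0_ss h q.1 q.2).

Lemma mxtrace_Hk k W : \tr (Hk h k *m W) = hform W (h k) (h k).
Proof. exact: mxtrace_rank1_mul. Qed.

Lemma feas_sdr_of_beams p :
  feas_P21 h P0 Gam s2 p -> feas_SDR h P0 Gam s2 (sdr_of_beams p).
Proof.
case: p => w R0 [/= hR0 sinr power pR0].
have interf k i : \tr (Hk h k *m (w i *m adj (w i))) = `|cdot (h k) (w i)| ^+ 2.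
  by rewrite mxtrace_Hk hform_rank1.
split=> /= [|k||//|k]; last exact: psd_rank1.
- by split=> // k; case: (psd_rank1 (w k)).
- under eq_bigr do rewrite interf.
  rewrite interf -ler_ratio_linear ?ltc0R //.
  exact/ltr_wpDl/ltc0R/s2_gt0/sumr_ge0 => i _; exact: exprn_ge0.
- by under eq_bigr do rewrite -vnorm2_mxtrace.
Qed.

Lemma sdr_of_beams_preserves p : feas_P21 h P0 Gam s2 p ->
  feas_SDR h P0 Gam s2 (sdr_of_beams p) /\ obj_SDR G (sdr_of_beams p) = obj_P21 G p.
Proof. by split; [exact: feas_sdr_of_beams |]. Qed.

Lemma w_ssE W k : w_ss h W k = rank1_factor (W k) (h k).
Proof. by []. Qed.

Lemma power_R0_ss W R0 :
  \sum_k vnorm2 (w_ss h W k) + \tr (R0_ss h W R0) = \sum_k \tr (W k) + \tr R0.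
Proof.
under eq_bigr do rewrite vnorm2_mxtrace.
by rewrite /R0_ss !mxtraceD mxtraceN !mxtrace_sum; ring.
Qed.

Section FromSDR.
Variables (W : 'I_K -> 'M[C]_M) (R0 : 'M[C]_M).
Hypothesis feasWR0 : feas_SDR h P0 Gam s2 (W, R0).

Lemma sdr_signal_gt0 k : 0 < hform (W k) (h k) (h k).
Proof.
case: feasWR0 => _ /(_ k) /= sinr _ _ psdW.
have interf_ge0 : 0 <= \sum_(i < K | i != k) \tr (Hk h k *m W i).
  by apply: sumr_ge0 => i _; rewrite mxtrace_Hk psd_hform_ge0.
have invGam_gt0 : 0 < (Gam k)%:C^-1 by rewrite invr_gt0 ltc0R.
rewrite -mxtrace_Hk -(pmulr_rgt0 _ invGam_gt0).
apply: lt_le_trans (ltc0R (s2_gt0 k)) (le_trans sinr _).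
by rewrite lerBlDr lerDl.
Qed.

Lemma cdot_w_ss_le k i :
  `|cdot (h k) (w_ss h W i)| ^+ 2 <= hform (W i) (h k) (h k).
Proof.
rewrite w_ssE (cdot_rank1_factor (h k) (ltW (sdr_signal_gt0 i))).
by apply: psd_cauchy_schwarz; [case: feasWR0 | exact: sdr_signal_gt0].
Qed.

Lemma cdot_w_ss_eq k :
  `|cdot (h k) (w_ss h W k)| ^+ 2 = hform (W k) (h k) (h k).
Proof.
have c_gt0 := sdr_signal_gt0 k.
rewrite w_ssE (cdot_rank1_factor (h k) (ltW c_gt0)) (ger0_norm (ltW c_gt0)).
by rewrite expr2 mulfK ?gt_eqF.
Qed.

Lemma psd_R0_ss : psd (R0_ss h W R0).
Proof.
case: feasWR0 => _ _ _ psdR0 psdW.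
rewrite /R0_ss -addrA -sumrB; apply: psdD => //; apply: psd_sum => k.
by rewrite w_ssE; apply: psd_sub_rank1_factor (psdW k) (sdr_signal_gt0 k).
Qed.

Lemma feas_beams_of_sdr : feas_P21 h P0 Gam s2 (beams_of_sdr (W, R0)).
Proof.
have psdR0ss := psd_R0_ss.
case: feasWR0 => _ sinr power _ _.
split=> //= [|k|]; first by case: psdR0ss.
- rewrite ler_ratio_linear ?ltc0R //; last first.
    by apply/ltr_wpDl/ltc0R/s2_gt0/sumr_ge0 => i _; exact: exprn_ge0.
  rewrite cdot_w_ss_eq; apply: le_trans (sinr k) _.
  rewrite mxtrace_Hk; apply: lerB => //; apply: ler_sum => i _.
  by rewrite mxtrace_Hk cdot_w_ss_le.
- by rewrite power_R0_ss.
Qed.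

End FromSDR.

Lemma obj_beams_of_sdr q : obj_P21 G (beams_of_sdr q) = obj_SDR G q.
Proof. by rewrite /obj_P21 /obj_SDR /= /R0_ss addrC subrK addrC. Qed.

Lemma beams_of_sdr_preserves q : feas_SDR h P0 Gam s2 q ->
  feas_P21 h P0 Gam s2 (beams_of_sdr q) /\ obj_P21 G (beams_of_sdr q) = obj_SDR G q.
Proof.
by case: q => W R0 feasWR0; split; [exact: feas_beams_of_sdr | exact: obj_beams_of_sdr].
Qed.

End Reformulation.

Theorem proposition2 (R : realType) (M N K : nat)
    (G : 'M[R[i]]_(N, M)) (h : 'I_K -> 'cV[R[i]]_M)
    (P0 : R) (Gam s2 : 'I_K -> R) :
  (0 < M)%N -> (0 < N)%N -> (0 < K)%N ->
  0 < P0 -> (forall k, 0 < Gam k) -> (forall k, 0 < s2 k) ->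
  val_P21 G h P0 Gam s2 = val_SDR G h P0 Gam s2 /\
  (forall (Wb : 'I_K -> 'M[R[i]]_M) (R0b : 'M[R[i]]_M),
     opt_SDR G h P0 Gam s2 (Wb, R0b) ->
     opt_P21 G h P0 Gam s2 (w_ss h Wb, R0_ss h Wb R0b)).
Proof.
move=> _ _ _ _ Gam_gt0 s2_gt0.
have to_sdr := sdr_of_beams_preserves G Gam_gt0 s2_gt0 (h := h) (P0 := P0).
have to_beams := beams_of_sdr_preserves G Gam_gt0 s2_gt0 (h := h) (P0 := P0).
split; first by rewrite /val_P21 /val_SDR (objective_images_eq to_sdr to_beams).
by move=> Wb R0b; apply: (back_minimizer to_sdr to_beams).
Qed.
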